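(* Let $p$ be a prime and $e \ge 1$. Then $A_{p^e}$ is the $p \times p$ block matrix (each block of size $p^{e-1}\times p^{e-1}$) \[A_{p^e} = \begin{pmatrix} A_{p^{e-1}} & A_{p^{e-1}} & \cdots & A_{p^{e-1}} & A_{p^{e-1}} \\ I_{p^{e-1}} & 0 & \cdots & 0 & -I_{p^{e-1}} \\ 0 & I_{p^{e-1}} & \cdots & 0 & -I_{p^{e-1}} \\ \vdots & & \ddots & & \vdots \\ 0 & 0 & \cdots & I_{p^{e-1}} & -I_{p^{e-1}} \end{pmatrix},\] with $A_1 = (1)$.
   Context: For a positive integer $k$, let $\Phi_d$ denote the $d$th cyclotomic polynomial and let $\Psi_k : \mathbf{Z}[X]/(X^k-1) \to \bigoplus_{d \mid k} \mathbf{Z}[X]/(\Phi_d(X))$ be the natural map $f \bmod (X^k-1) \mapsto \bigoplus_{d\mid k} f \bmod \Phi_d(X)$. Endow $\mathbf{Z}[X]/(X^k-1)$ with the basis $(1, \overline{X}, \dots, \overline{X}^{k-1})$, each $\mathbf{Z}[X]/(\Phi_d(X))$ with the basis $(1, \overline{X}, \dots, \overline{X}^{\phi(d)-1})$, and order the summands of the direct sum by increasing $d$. $A_k$ is the $k\times k$ integer matrix of $\Psi_k$ with respect to these bases (the $j$th column is the coordinate vector of $\Psi_k(\overline{X}^{j})$). $I_r$ is the $r\times r$ identity matrix. *)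

From HB Require Import structures.
From mathcomp Require Import all_boot all_order all_algebra all_field.
Set Implicit Arguments. Unset Strict Implicit. Unset Printing Implicit Defensive.
Import GRing.Theory.
Local Open Scope ring_scope.

(* Coordinate vector (as a list of integers, concatenated over d | k in
   increasing order) of Psi_k(X^j) = (X^j mod Phi_d)_{d | k}, each component
   written in the basis 1, X, ..., X^(phi(d)-1). *)
Definition Psi_coords (k j : nat) : seq int :=
  flatten [seq [seq (('X^j %% 'Phi_d) : {poly int})`_i | i <- iota 0 (totient d)]
          | d <- divisors k].

Definition A (k : nat) : 'M[int]_k :=
  \matrix_(r < k, j < k) nth 0 (Psi_coords k j) r.

From HB Require Import structures.
From mathcomp Require Import all_boot all_order all_algebra all_field.
From mathcomp Require Import zify.
Set Implicit Arguments.
Unset Strict Implicit.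
Unset Printing Implicit Defensive.

Import GRing.Theory.
Local Open Scope ring_scope.

(* The divisors of p^(e+1) are those of p^e followed by p^(e+1), so the first
   p^e rows of A_(p^(e+1)) form A_(p^e) applied to X^j, which only depends on
   j mod p^e because every Phi_d with d | p^e divides X^(p^e) - 1.  The last
   (p-1)p^e rows are the coefficients of X^j mod Phi_(p^(e+1)), and
   Phi_(p^(e+1)) = sum_(k<p) X^(k p^e): X^j is already reduced unless
   j = (p-1)p^e + d, in which case X^j = -sum_(k<p-1) X^(k p^e + d). *)

Lemma divisors_pfactor p e : prime p ->
  divisors (p ^ e) = [seq p ^ i | i <- iota 0 e.+1]%N.
Proof.
move=> p_pr; have p_gt1 := prime_gt1 p_pr.
apply: (irr_sorted_eq ltn_trans ltnn (sorted_divisors_ltn _)).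
  by apply: homo_sorted (iota_ltn_sorted 0 _) => i k; rewrite ltn_exp2l.
move=> d; rewrite -dvdn_divisors ?expn_gt0 ?prime_gt0 //.
apply/dvdn_pfactor/mapP => // -[i]; last by rewrite mem_iota => /andP[_ ?]; exists i.
by move=> le_ie ->; exists i; rewrite // mem_iota.
Qed.

Lemma divisors_pfactorS p e : prime p ->
  divisors (p ^ e.+1) = rcons (divisors (p ^ e)) (p ^ e.+1)%N.
Proof.
by move=> p_pr; rewrite !divisors_pfactor // -addn1 iotaD map_cat cats1.
Qed.

Lemma Cyclotomic_dvdp_Xn_sub1 k n : (0 < n)%N -> (k %| n)%N ->
  'Phi_k %| 'X^n - 1.
Proof.
move=> n_gt0 kn; rewrite -(prod_Cyclotomic n_gt0) (big_rem k); first exact: dvdp_mulIl.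
by rewrite -dvdn_divisors.
Qed.

Lemma dvdp_Xn_sub1_mul (R : idomainType) n c :
  ('X^n - 1 : {poly R}) %| 'X^(n * c) - 1.
Proof. by rewrite exprM (subrX1 'X^n) dvdp_mulIl. Qed.

Lemma modp_Cyclotomic_Xn k n c d : (0 < n)%N -> (k %| n)%N ->
  'X^(c * n + d) %% 'Phi_k = 'X^d %% 'Phi_k.
Proof.
move=> n_gt0 kn; have lc_unit : lead_coef 'Phi_k \is a GRing.unit.
  by rewrite (monicP (Cyclotomic_monic k)) unitr1.
have Phi_dvd : 'Phi_k %| 'X^d * ('X^(n * c) - 1).
  by rewrite dvdp_mull // (dvdp_trans (Cyclotomic_dvdp_Xn_sub1 n_gt0 kn)) ?dvdp_Xn_sub1_mul.
have -> : 'X^(c * n + d) = 'X^d * ('X^(n * c) - 1) + 'X^d :> {poly int}.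
  by rewrite mulrBr mulr1 subrK -exprD addnC mulnC.
by rewrite (Pdiv.IdomainUnit.modpD lc_unit) (modp_eq0 Phi_dvd) add0r.
Qed.

Lemma Cyclotomic_pfactorS p e : prime p ->
  'Phi_(p ^ e.+1) = \sum_(k < p) 'X^(k * p ^ e).
Proof.
move=> p_pr; have pe_gt0 : (0 < p ^ e)%N by rewrite expn_gt0 prime_gt0.
have Xpe_neq0 : 'X^(p ^ e) - 1 != 0 :> {poly int} by rewrite monic_neq0 ?monicXnsubC.
apply: (mulfI Xpe_neq0); transitivity ('X^(p ^ e.+1) - 1 : {poly int}).
  rewrite -(prod_Cyclotomic (n := p ^ e.+1)) ?expn_gt0 ?prime_gt0 //.
  by rewrite divisors_pfactorS // -cats1 big_cat big_seq1 prod_Cyclotomic.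
rewrite expnSr exprM (subrX1 'X^(p ^ e)).
by congr (_ * _); apply: eq_bigr => k _; rewrite -exprM mulnC.
Qed.

Definition Phi_coords (k j : nat) : seq int :=
  [seq ('X^j %% 'Phi_k)`_i | i <- iota 0 (totient k)].

Lemma nth_Phi_coords k j i : (i < totient k)%N ->
  nth 0 (Phi_coords k j) i = ('X^j %% 'Phi_k)`_i.
Proof. by move=> lt_i_k; rewrite (nth_map 0%N) ?nth_iota ?size_iota. Qed.

Lemma Psi_coords_pfactorS p e j : prime p ->
  Psi_coords (p ^ e.+1) j = Psi_coords (p ^ e) j ++ Phi_coords (p ^ e.+1) j.
Proof.
move=> p_pr; rewrite /Psi_coords divisors_pfactorS // map_rcons -cats1.
by rewrite flatten_cat /= cats0.
Qed.

Lemma size_Psi_coords_pfactor p e j : prime p ->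
  size (Psi_coords (p ^ e) j) = (p ^ e)%N.
Proof.
move=> p_pr; elim: e => [|e IHe]; first by rewrite /Psi_coords.
rewrite Psi_coords_pfactorS // size_cat IHe size_map size_iota totient_pfactor //=.
by rewrite -mulSn prednK ?prime_gt0 ?expnS.
Qed.

Lemma Psi_coords_mulnDl k c d : (0 < k)%N ->
  Psi_coords k (c * k + d) = Psi_coords k d.
Proof.
move=> k_gt0; congr flatten; apply/eq_in_map => l; rewrite -dvdn_divisors // => lk.
by rewrite /Phi_coords modp_Cyclotomic_Xn.
Qed.

Lemma eqn_mulnD_ltn m a b c d : (b < m)%N -> (d < m)%N ->
  (a * m + b == c * m + d)%N = (a == c) && (b == d).
Proof.
move=> lt_bm lt_dm; apply/eqP/andP => [eq_abcd|[/eqP-> /eqP->]//].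
have m_gt0 : (0 < m)%N by apply: leq_ltn_trans lt_bm.
split; apply/eqP.
  by have := congr1 (divn^~ m) eq_abcd; rewrite /= !divnMDl // !divn_small ?addn0.
by have := congr1 (modn^~ m) eq_abcd; rewrite /= !modnMDl !modn_small.
Qed.

Section PrimePowerCyclotomic.

Variables p e : nat.
Hypothesis p_pr : prime p.
Local Notation m := (p ^ e)%N.
Local Notation Phi := 'Phi_(p ^ e.+1).

Lemma size_Cyclotomic_pfactorS : size Phi = (p.-1 * m).+1.
Proof. by rewrite size_Cyclotomic totient_pfactor. Qed.

Lemma modp_Cyclotomic_pfactorS_small c d : (c < p.-1)%N -> (d < m)%N ->
  'X^(c * m + d) %% Phi = 'X^(c * m + d).
Proof.
by move=> lt_cp lt_dm; rewrite modp_small // size_Cyclotomic_pfactorS size_polyXn; nia.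
Qed.

Lemma modp_Cyclotomic_pfactorS_last d : (d < m)%N ->
  'X^(p.-1 * m + d) %% Phi = - \sum_(k < p.-1) 'X^(k * m + d).
Proof.
move=> lt_dm; have lc_unit : lead_coef Phi \is a GRing.unit.
  by rewrite (monicP (Cyclotomic_monic _)) unitr1.
symmetry; apply: (Pdiv.IdomainUnit.modpP lc_unit (q := 'X^d)).
  rewrite Cyclotomic_pfactorS // -(prednK (prime_gt0 p_pr)) big_ord_recr /=.
  rewrite prednK ?prime_gt0 // mulrDr mulr_sumr addrAC -exprD addnC.
  rewrite (eq_bigr (fun k : 'I_p.-1 => 'X^(k * m + d))) ?subrr ?add0r // => k _.
  by rewrite -exprD addnC.
rewrite size_polyN size_Cyclotomic_pfactorS ltnS.
apply: leq_trans (size_sum _ _ _) _; apply/bigmax_leqP => k _.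
by rewrite size_polyXn; have := ltn_ord k; nia.
Qed.

Lemma nth_Phi_coords_pfactorS a b c d : (a < p.-1)%N -> (b < m)%N ->
  (c < p)%N -> (d < m)%N ->
  nth 0 (Phi_coords (p ^ e.+1) (c * m + d)) (a * m + b) =
    ((c == a) && (b == d))%:R - ((c == p.-1) && (b == d))%:R.
Proof.
move=> lt_ap lt_bm lt_cp lt_dm.
rewrite nth_Phi_coords ?totient_pfactor //=; last by nia.
have [lt_cp1|ge_cp1] := ltnP c p.-1.
  rewrite modp_Cyclotomic_pfactorS_small // coefXn eqn_mulnD_ltn //.
  by rewrite (ltn_eqF lt_cp1) subr0 eq_sym.
have -> : c = p.-1 by lia.
rewrite modp_Cyclotomic_pfactorS_last // coefN coef_sum eqxx (gtn_eqF lt_ap) sub0r.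
congr (- _); rewrite (bigD1 (Ordinal lt_ap)) //= coefXn eqn_mulnD_ltn // eqxx /=.
rewrite big1 ?addr0 // => k neq_ka; rewrite coefXn eqn_mulnD_ltn //.
by move: neq_ka; rewrite -val_eqE /= eq_sym => /negbTE ->.
Qed.

End PrimePowerCyclotomic.

Lemma A1 : A 1 = 1%:M.
Proof.
apply/matrixP => i k; rewrite !ord1 !mxE /=.
by rewrite modp_small ?coef1 // size_Cyclotomic size_polyC.
Qed.

Theorem lemma2p5 :
  A 1 = 1%:M /\
  forall (p e : nat), prime p -> (0 < e)%N ->
  forall (r j : 'I_(p ^ e)) (a c : 'I_p) (b d : 'I_(p ^ e.-1)),
    val r = (a * p ^ e.-1 + b)%N -> val j = (c * p ^ e.-1 + d)%N ->
    A (p ^ e) r j =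
      (if a == 0 :> nat then A (p ^ e.-1) b d
       else (((c == a.-1 :> nat) && (b == d))%:R
             - ((c == p.-1 :> nat) && (b == d))%:R)).
Proof.
split=> [|p [//|e] p_pr _ r j a c b d /= def_r def_j]; first exact: A1.
have pe_gt0 : (0 < p ^ e)%N by rewrite expn_gt0 prime_gt0.
rewrite !mxE Psi_coords_pfactorS // nth_cat size_Psi_coords_pfactor // def_r def_j.
have [a0 | a_gt0] := posnP a.
  by rewrite a0 mul0n add0n ltn_ord Psi_coords_mulnDl.
have -> : (a * p ^ e + b < p ^ e)%N = false by nia.
rewrite -(prednK a_gt0) mulSn -addnA addKn.
by rewrite nth_Phi_coords_pfactorS //; have := ltn_ord a; lia.
Qed.
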